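(* Fix $m\ge1$, write $x=t_m$, and let $x\mapsto H(x)$ be an integral curve of $X_m$ in $\mathcal H$. Define the differential Faà di Bruno basis $\{F^{(j)}\}_{j\in\mathbb Z}$ at each $x$ by $F^{(a)}=H^{(a)}$ for $a=0,\dots,m-1$ and $F^{(j+m)}=(\partial_x+H^{(m)})F^{(j)}$ for all $j\in\mathbb Z$ (for $j<0$, $F^{(j)}$ is the unique Laurent series in $z$ with $x$-dependent coefficients satisfying this relation; $F^{(j)}=z^j+$lower order). Let $\widetilde{\mathcal H}_+$ be the span of $\{F^{(j)}\}_{j\ge0}$ and $\widetilde{\mathcal H}_-$ the space of (possibly infinite) combinations of $\{F^{(j)}\}_{j<0}$, with coefficients functions of $x$, and let $\tilde\pi_\pm$ be the projections of $\mathcal L=\widetilde{\mathcal H}_+\oplus\widetilde{\mathcal H}_-$. Then $H^{(j)}(x)=\tilde\pi_+(z^j)$ for all $j\ge0$, and the flows induced by the $X_j$ on the orbit space $\mathcal Q_m$ (coordinatized by $(H^{(1)}(x),\dots,H^{(m)}(x))$) are $$\frac{\partial H^{(a)}}{\partial t_j}=-\tilde\pi_-\big(H^{(a)}\,\tilde\pi_+(z^j)\big),\qquad a=1,\dots,m,\ j\ge1 .$$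
   Context: Let $z$ be a formal variable and $\mathcal L$ the space of formal Laurent series $\sum_{j\le N} l_j z^j$ (finitely many positive powers of $z$), here with coefficients functions of $x$. Let $\mathcal H$ be the set of sequences $H=(H^{(k)})_{k\ge0}$ with $H^{(0)}=1$ and, for $k\ge1$, $H^{(k)}=z^k+\sum_{l\ge1}H^k_l z^{-l}$; set $H^0_l=0$. The central system (CS) is the family of commuting vector fields $X_j$, $j\ge1$, on $\mathcal H$, with times $t_j$, defined by $$\frac{\partial H^{(k)}}{\partial t_j}=H^{(j+k)}-H^{(j)}H^{(k)}+\sum_{l=1}^{k}H^j_lH^{(k-l)}+\sum_{l=1}^{j}H^k_lH^{(j-l)},\qquad k\ge0.$$ $\mathcal Q_m$ is the space of integral curves (orbits) of $X_m$; an integral curve is determined by its first $m$ currents $H^{(1)}(x),\dots,H^{(m)}(x)$, and since the $X_j$ commute with $X_m$ they induce flows on $\mathcal Q_m$. *)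

From HB Require Import structures.
From mathcomp Require Import all_boot all_order all_algebra zify.
Set Implicit Arguments. Unset Strict Implicit. Unset Printing Implicit Defensive.
Import Order.TTheory GRing.Theory Num.Theory.
Local Open Scope ring_scope.

(* Formal Laurent series  sum_{n <= N} l_n z^n  with
   coefficients in a commutative differential ring A (the "functions of x"). *)

Local Obligation Tactic := idtac.

Section Laurent.
Variable A : comPzRingType.

Record laurent := Laurent {
  lcoef : int -> A;
  lbound : int;
  lboundP : forall n : int, lbound < n -> lcoef n = 0 }.

Definition leqL (f g : laurent) : Prop := forall n : int, lcoef f n = lcoef g n.

Definition trunc (z : int) : nat := match z with Posz k => k | Negz _ => 0%N end.

Program Definition lzero : laurent := @Laurent (fun _ => 0) 0 _.
Next Obligation. by []. Qed.

Program Definition lmono (k : int) : laurent :=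
  @Laurent (fun n => if n == k then 1 else 0) k _.
Next Obligation. by move=> k n hn /=; rewrite (gt_eqF hn). Qed.

Program Definition ladd (f g : laurent) : laurent :=
  @Laurent (fun n => lcoef f n + lcoef g n) (Num.max (lbound f) (lbound g)) _.
Next Obligation.
move=> f g n /=; rewrite gt_max => /andP[hf hg].
by rewrite (lboundP hf) (lboundP hg) addr0.
Qed.

Program Definition lopp (f : laurent) : laurent :=
  @Laurent (fun n => - lcoef f n) (lbound f) _.
Next Obligation. by move=> f n hn /=; rewrite (lboundP hn) oppr0. Qed.

Definition lsub (f g : laurent) : laurent := ladd f (lopp g).

Program Definition lscale (c : A) (f : laurent) : laurent :=
  @Laurent (fun n => c * lcoef f n) (lbound f) _.
Next Obligation. by move=> c f n hn /=; rewrite (lboundP hn) mulr0. Qed.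

(* Cauchy product: (fg)_n = sum_{n - Ng <= i <= Nf} f_i g_(n-i) *)
Program Definition lmul (f g : laurent) : laurent :=
  @Laurent (fun n => \sum_(k < trunc (lbound f + lbound g - n + 1))
                       lcoef f (n - lbound g + k%:Z) * lcoef g (lbound g - k%:Z))
           (lbound f + lbound g) _.
Next Obligation.
move=> f g n hn /=.
have : lbound f + lbound g - n + 1 <= 0.
  by move: hn; lia.
case: (lbound f + lbound g - n + 1) => [k|k] /=; last by rewrite big_ord0.
by rewrite lez_nat leqn0 => /eqP ->; rewrite big_ord0.
Qed.

Variable d : {additive A -> A}.
Program Definition lderiv (f : laurent) : laurent :=
  @Laurent (fun n => d (lcoef f n)) (lbound f) _.
Next Obligation. by move=> f n hn /=; rewrite (lboundP hn) raddf0. Qed.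

End Laurent.

Arguments lzero {A}.
Arguments lmono {A}.

Definition is_derivation (A : comPzRingType) (d : {additive A -> A}) : Prop :=
  forall a b : A, d (a * b) = d a * b + a * d b.

Definition lsum (A : comPzRingType) (n : nat) (F : nat -> laurent A) : laurent A :=
  \big[@ladd A/lzero]_(i < n) F i.

(* A point of H is given by the coefficients h k l = H^k_l (k, l >= 1);
   the values h 0 _ and h _ 0 are irrelevant: Hc enforces H^0_l = 0. *)
Definition Hc (A : comPzRingType) (h : nat -> nat -> A) (k l : nat) : A :=
  if (k == 0)%N || (l == 0)%N then 0 else h k l.

(* H^(k) = z^k + sum_{l>=1} H^k_l z^{-l}  (H^(0) = 1) *)
Program Definition Hs (A : comPzRingType) (h : nat -> nat -> A) (k : nat) : laurent A :=
  @Laurent A (fun n => (if n == k%:Z then 1 else 0) + (if n < 0 then Hc h k `|n|%N else 0))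
           k%:Z _.
Next Obligation.
move=> A h k n hn /=.
have hn0 : ~~ (n < 0) by rewrite -leNgt; apply: le_trans (ltW hn).
by rewrite (negbTE hn0) (gt_eqF hn) addr0.
Qed.

(* right-hand side of the central system: d H^(k) / d t_j *)
Definition CS (A : comPzRingType) (h : nat -> nat -> A) (j k : nat) : laurent A :=
  ladd (lsub (Hs h (j + k)) (lmul (Hs h j) (Hs h k)))
       (ladd (lsum k (fun i => lscale (Hc h j i.+1) (Hs h (k - i.+1))))
             (lsum j (fun i => lscale (Hc h k i.+1) (Hs h (j - i.+1))))).

(* x |-> H(x) is an integral curve of X_m, with x = t_m and d = d/dx *)
Definition integral_curve (A : comPzRingType) (d : {additive A -> A})
    (h : nat -> nat -> A) (m : nat) : Prop :=
  forall k : nat, leqL (lderiv d (Hs h k)) (CS h m k).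

Definition is_FdB (A : comPzRingType) (d : {additive A -> A})
    (h : nat -> nat -> A) (m : nat) (F : int -> laurent A) : Prop :=
  [/\ forall a : nat, (a < m)%N -> leqL (F a%:Z) (Hs h a),
      forall j : int, leqL (F (j + m%:Z)) (ladd (lderiv d (F j)) (lmul (Hs h m) (F j)))
    & forall j : int, lcoef (F j) j = 1 /\ forall n : int, j < n -> lcoef (F j) n = 0].

(* f = sum_j c_j F^(j), with c_j = 0 for j > N (finite positive part, possibly
   infinite negative part; the n-th coefficient only involves j >= n since
   F^(j) = z^j + lower order terms) *)
Definition decomp (A : comPzRingType) (F : int -> laurent A) (f : laurent A)
    (c : int -> A) (N : nat) : Prop :=
  (forall j : int, N%:Z < j -> c j = 0) /\
  forall n : int, lcoef f n =
    \sum_(k < trunc (N%:Z - n + 1)) c (n + k%:Z) * lcoef (F (n + k%:Z)) n.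

Definition piplus (A : comPzRingType) (F : int -> laurent A) (c : int -> A) (N : nat)
    : laurent A :=
  lsum N.+1 (fun j => lscale (c j%:Z) (F j%:Z)).

Definition piminus (A : comPzRingType) (F : int -> laurent A) (f : laurent A)
    (c : int -> A) (N : nat) : laurent A :=
  lsub f (piplus F c N).

From HB Require Import structures.
From mathcomp Require Import all_boot all_order all_algebra zify ring.
Import Order.TTheory GRing.Theory Num.Theory.
Set Implicit Arguments. Unset Strict Implicit. Unset Printing Implicit Defensive.
Local Open Scope ring_scope.

(* The span [H~_+] of the [F^(i)], [i >= 0], is stable under [d/dx + H^(m)],
   which shifts [F^(i)] to [F^(i+m)].  Along an integral curve of [X_m] the
   central system expresses [H^(k+m)] as [(d/dx + H^(m)) H^(k)] minus
   combinations of lower [H]'s, so every [H^(j)] lies in [H~_+].  As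
   [F^(j) = z^j + O(z^(j-1))], an element of [H~_+] is determined by its
   coefficients of nonnegative degree; since [H^(j) = z^j + O(z^-1)] this
   gives [pi_+(z^j) = H^(j)].  Likewise the nonnegative part of
   [H^(a) H^(j)] is [H^(a+j)] plus combinations of lower [H]'s, which lies in
   [H~_+] and is therefore [pi_+(H^(a) H^(j))]; the central system says that
   [dH^(a)/dt_j] is exactly this minus [H^(a) H^(j)], i.e. [-pi_-]. *)

Lemma le_trunc (x : int) : x <= (trunc x)%:Z.
Proof. by case: x => [k|k] //=; rewrite lez_nat. Qed.

Lemma truncK (x : int) : 0 <= x -> (trunc x)%:Z = x.
Proof. by case: x. Qed.

Lemma trunc_le0 (x : int) : x <= 0 -> trunc x = 0%N.
Proof. by case: x => [k|k] //=; rewrite lez_nat leqn0 => /eqP. Qed.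

Lemma trunc_leq (x : int) (y : nat) : x <= y%:Z -> (trunc x <= y)%N.
Proof. by case: x => [k|k] //=; rewrite lez_nat. Qed.

Lemma sum_ord_widen_zero (A : nmodType) (T T' : nat) (x : nat -> A) :
  (T <= T')%N -> (forall k, (T <= k)%N -> x k = 0) ->
  \sum_(k < T) x k = \sum_(k < T') x k.
Proof.
move=> hT hx; rewrite -(subnKC hT) big_split_ord /= [X in _ = _ + X]big1 ?addr0 //.
by move=> k _; apply: hx; apply: leq_addr.
Qed.

Lemma sum_ord_widen_if (A : nmodType) (M M' : nat) (x : nat -> A) : (M <= M')%N ->
  \sum_(i < M) x i = \sum_(i < M') (if (i < M)%N then x i else 0).
Proof. by move=> hM; rewrite (big_ord_widen _ x hM) big_mkcond. Qed.

Section LaurentProduct.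
Variable A : comPzRingType.
Implicit Types f g : laurent A.

(* [lmul] is [lconv] with [B := lbound g]; [lmulE] frees both [B] and [L]. *)
Definition lconv f g (n B : int) (L : nat) : A :=
  \sum_(k < L) lcoef f (n - B + k%:Z) * lcoef g (B - k%:Z).

Lemma lconv_shift f g n B (D L : nat) :
  (forall k, B < k -> lcoef g k = 0) ->
  lconv f g n (B + D%:Z) (D + L) = lconv f g n B L.
Proof.
move=> hg; rewrite /lconv big_split_ord /= big1 ?add0r.
  apply: eq_bigr => i _ /=; congr (lcoef f _ * lcoef g _); lia.
move=> i _ /=; rewrite hg ?mulr0 //; have := ltn_ord i; lia.
Qed.

Lemma lconv_widen f g n B (L L' : nat) :
  (forall k : nat, (L <= k)%N -> lcoef f (n - B + k%:Z) = 0) -> (L <= L')%N ->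
  lconv f g n B L' = lconv f g n B L.
Proof.
move=> hf hL; rewrite /lconv -(subnKC hL) big_split_ord /=.
rewrite [X in _ + X]big1 ?addr0 // => i _; rewrite hf ?mul0r //; lia.
Qed.

Lemma lmulE {f g n} {Bf Bg : int} {L : nat} :
  (forall k, Bf < k -> lcoef f k = 0) -> (forall k, Bg < k -> lcoef g k = 0) ->
  Bf + Bg - n + 1 <= L%:Z ->
  lcoef (lmul f g) n = lconv f g n Bg L.
Proof.
move=> hf hg hL; rewrite [LHS]/=; rewrite -/(lconv f g n (lbound g) _).
set lg := lbound g; set lf := lbound f.
set T := trunc (lf + lg - n + 1).
set D1 := trunc (Bg - lg); set D2 := trunc (lg - Bg).
have hT := le_trunc (lf + lg - n + 1).
have hD : lg + D1%:Z = Bg + D2%:Z.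
  case: (leP lg Bg) => h.
    rewrite /D1 /D2 truncK ?subr_ge0 // trunc_le0; lia.
  rewrite /D1 /D2 (trunc_le0 (x := Bg - lg)) ?truncK; lia.
have e1 : lconv f g n lg T = lconv f g n (lg + D1%:Z) (D1 + (T + L + D2)).
  rewrite lconv_shift; last by move=> k hk; apply: lboundP.
  symmetry; apply: lconv_widen; last by lia.
  move=> k hk; apply: lboundP; rewrite -/lf; lia.
have e2 : lconv f g n Bg L = lconv f g n (Bg + D2%:Z) (D2 + (T + L + D1)).
  rewrite lconv_shift //; symmetry; apply: lconv_widen; last by lia.
  move=> k hk; apply: hf; lia.
rewrite e1 e2 hD; congr lconv; lia.
Qed.

Lemma lmul_congr f f' g g' :
  leqL f f' -> leqL g g' -> leqL (lmul f g) (lmul f' g').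
Proof.
move=> hf hg n; have hT := le_trunc (lbound f + lbound g - n + 1).
have bf k : lbound f < k -> lcoef f' k = 0 by move=> hk; rewrite -hf; apply: lboundP.
have bg k : lbound g < k -> lcoef g' k = 0 by move=> hk; rewrite -hg; apply: lboundP.
rewrite (lmulE (@lboundP _ f) (@lboundP _ g) hT) (lmulE bf bg hT).
by apply: eq_bigr => i _; rewrite hf hg.
Qed.

Lemma lmulC f g : leqL (lmul f g) (lmul g f).
Proof.
move=> n; rewrite /= [lbound g + lbound f]addrC.
set X := lbound f + lbound g - n + 1.
rewrite -(big_mkord xpredT (fun k : nat =>
  lcoef f (n - lbound g + k%:Z) * lcoef g (lbound g - k%:Z))) big_rev_mkord subn0.
apply: eq_bigr => -[i /= hi] _.
have hX : (trunc X)%:Z = X.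
  by apply: truncK; rewrite leNgt; apply/negP => /ltW/trunc_le0 h0; rewrite h0 in hi.
by rewrite [RHS]mulrC; congr (lcoef f _ * lcoef g _); move: hX hi; rewrite /X; lia.
Qed.

Lemma lmul_sumr f g (M : nat) (a : nat -> A) (G : nat -> laurent A) (B : int) :
  (forall n, lcoef g n = \sum_(i < M) a i * lcoef (G i) n) ->
  (forall (i : nat) k, (i < M)%N -> B < k -> lcoef (G i) k = 0) ->
  forall n, lcoef (lmul f g) n = \sum_(i < M) a i * lcoef (lmul f (G i)) n.
Proof.
move=> hg hG n; set Bg := Num.max (lbound g) B.
have hL := le_trunc (lbound f + Bg - n + 1).
rewrite (lmulE (@lboundP _ f) _ hL); last first.
  by move=> k; rewrite gt_max => /andP[h1 _]; apply: lboundP.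
have eG (i : 'I_M) : lcoef (lmul f (G i)) n = lconv f (G i) n Bg (trunc (lbound f + Bg - n + 1)).
  by apply: (lmulE (@lboundP _ f)) => // k; rewrite gt_max => /andP[_]; exact: hG.
under [RHS]eq_bigr do rewrite eG.
rewrite /lconv; under [LHS]eq_bigr do rewrite hg mulr_sumr.
rewrite exchange_big /=; apply: eq_bigr => i _.
by rewrite mulr_sumr; apply: eq_bigr => k _; rewrite mulrCA.
Qed.

Lemma lcoef_lsum (N : nat) (G : nat -> laurent A) n :
  lcoef (lsum N G) n = \sum_(i < N) lcoef (G i) n.
Proof. exact: (big_morph (fun g => lcoef g n) (id1 := 0) (op1 := +%R)). Qed.

Lemma lmul_monic_coef (f g : laurent A) (a : nat) (B : int) (L : nat) (n : int) :
  (forall k, B < k -> lcoef f k = 0) -> (forall k, a%:Z < k -> lcoef g k = 0) ->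
  lcoef g a%:Z = 1 -> (forall k : nat, (k < a)%N -> lcoef g k%:Z = 0) ->
  B - n <= L%:Z ->
  lcoef (lmul f g) n =
    lcoef f (n - a%:Z) + \sum_(l < L) lcoef f (n + l.+1%:Z) * lcoef g (- l.+1%:Z).
Proof.
move=> hf hg ga g_lt hL.
rewrite (@lmulE _ _ _ B a%:Z (a.+1 + L) hf hg); last by lia.
rewrite /lconv big_split_ord big_ord_recl /=.
rewrite [X in _ + X + _]big1 => [|i _]; last first.
  have ia := ltn_ord i; rewrite (_ : bump 0 i = i.+1) //.
  by rewrite (_ : a%:Z - i.+1%:Z = (a - i.+1)%N%:Z) ?g_lt ?mulr0 //; lia.
rewrite !subr0 !addr0 ga mulr1; congr (_ + _); apply: eq_bigr => l _.
by congr (lcoef f _ * lcoef g _); lia.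
Qed.
End LaurentProduct.

Section Hplus.
Variables (A : comPzRingType) (F : int -> laurent A).

Definition in_Hplus (g : int -> A) : Prop :=
  exists (M : nat) (a : nat -> A), forall n, g n = \sum_(i < M) a i * lcoef (F i%:Z) n.

Lemma in_Hplus_ext (g g' : int -> A) :
  (forall n, g' n = g n) -> in_Hplus g -> in_Hplus g'.
Proof. by move=> e [M [a ha]]; exists M, a => n; rewrite e ha. Qed.

Lemma in_Hplus0 : in_Hplus (fun _ => 0).
Proof. by exists 0%N, (fun _ => 0) => n; rewrite big_ord0. Qed.

Lemma in_HplusD {g1 g2 : int -> A} :
  in_Hplus g1 -> in_Hplus g2 -> in_Hplus (fun n => g1 n + g2 n).
Proof.
move=> [M1 [a1 h1]] [M2 [a2 h2]].
exists (M1 + M2)%N, (fun i => (if (i < M1)%N then a1 i else 0) + (if (i < M2)%N then a2 i else 0)).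
move=> n; rewrite h1 h2.
rewrite (@sum_ord_widen_if _ M1 (M1 + M2) (fun i => a1 i * lcoef (F i%:Z) n)) ?leq_addr //.
rewrite (@sum_ord_widen_if _ M2 (M1 + M2) (fun i => a2 i * lcoef (F i%:Z) n)) ?leq_addl //.
rewrite -big_split /=.
by apply: eq_bigr => i _; rewrite mulrDl; case: ifP; case: ifP; rewrite ?mul0r.
Qed.

Lemma in_HplusZ (c : A) {g : int -> A} : in_Hplus g -> in_Hplus (fun n => c * g n).
Proof.
move=> [M [a ha]]; exists M, (fun i => c * a i) => n.
by rewrite ha mulr_sumr; apply: eq_bigr => i _; rewrite mulrA.
Qed.

Lemma in_Hplus_sum (K : nat) (G : 'I_K -> int -> A) :
  (forall i, in_Hplus (G i)) -> in_Hplus (fun n => \sum_(i < K) G i n).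
Proof.
elim: K G => [|K IH] G hG.
  by apply: (in_Hplus_ext _ in_Hplus0) => n; rewrite big_ord0.
apply: (in_Hplus_ext (g := fun n => \sum_(i < K) G (widen_ord (leqnSn K) i) n + G ord_max n)).
  by move=> n; rewrite big_ord_recr.
exact: in_HplusD (IH _ (fun i => hG _)) (hG _).
Qed.

Lemma in_Hplus_basis (i : nat) : in_Hplus (lcoef (F i%:Z)).
Proof.
exists i.+1, (fun j => if j == i then 1 else 0) => n.
rewrite big_ord_recr /= eqxx mul1r big1 ?add0r // => j _.
by rewrite (ltn_eqF (ltn_ord j)) mul0r.
Qed.

Hypothesis F_monic : forall j : int, lcoef (F j) j = 1.
Hypothesis F_bound : forall (j n : int), j < n -> lcoef (F j) n = 0.

(* Over a basis that is unitriangular w.r.t. the degree in [z], a vanishing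
   combination has vanishing coefficients; compare the coefficients of [z^n]
   for [n] decreasing from [K]. *)
Lemma unitriangular_free (b : nat -> A) (K : nat) :
  (forall i, (K <= i)%N -> b i = 0) ->
  (forall n : nat, \sum_(k < K) b (n + k)%N * lcoef (F (n + k)%N%:Z) n%:Z = 0) ->
  forall i, b i = 0.
Proof.
case: K => [|K] bK hb; first by move=> i; apply: bK.
suff bt t : forall i, (K.+1 <= i + t)%N -> b i = 0.
  by move=> i; apply: (bt K.+1); apply: leq_addl.
elim: t => [|t IH] i hi; first by apply: bK; rewrite -[i]addn0.
have := hb i; rewrite big_ord_recl /= addn0 F_monic mulr1 big1 ?addr0 // => k _.
by rewrite IH ?mul0r //; rewrite /bump /=; move: hi; lia.
Qed.

Lemma decomp_coef_nat (f : laurent A) (c : int -> A) (N K : nat) (n : nat) :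
  decomp F f c N -> (N < K)%N ->
  lcoef f n%:Z = \sum_(k < K) c (n + k)%N%:Z * lcoef (F (n + k)%N%:Z) n%:Z.
Proof.
move=> [hc ->] hK.
rewrite (@sum_ord_widen_zero _ _ K (fun k => c (n%:Z + k%:Z) * lcoef (F (n%:Z + k%:Z)) n%:Z)).
- by apply: eq_bigr => k _; rewrite PoszD.
- by apply: trunc_leq; lia.
- move=> k hk; rewrite hc ?mul0r //.
  by have := le_trunc (N%:Z - n%:Z + 1); move: hk; lia.
Qed.

Lemma basis_sum_coef_nat (a : nat -> A) (K n : nat) :
  (forall i, (K <= i)%N -> a i = 0) ->
  \sum_(i < K) a i * lcoef (F i%:Z) n%:Z =
  \sum_(k < K) a (n + k)%N * lcoef (F (n + k)%N%:Z) n%:Z.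
Proof.
move=> aK; rewrite (@sum_ord_widen_zero _ K (n + K) (fun i => a i * lcoef (F i%:Z) n%:Z)).
- rewrite big_split_ord /= big1 ?add0r // => i _.
  by rewrite F_bound ?mulr0 //; have := ltn_ord i; lia.
- exact: leq_addl.
- by move=> i hi; rewrite aK ?mul0r.
Qed.

(* Both [pi_+ f] and [g] lie in [H~_+] and agree with [f] in degrees [>= 0];
   their difference is then killed by [unitriangular_free]. *)
Lemma piplus_in_HplusE (f : laurent A) (c : int -> A) (N : nat) (g : int -> A) :
  decomp F f c N -> in_Hplus g -> (forall n : nat, lcoef f n%:Z = g n%:Z) ->
  forall n, lcoef (piplus F c N) n = g n.
Proof.
move=> hdec [M [a ha]] hfg; have [hc _] := hdec.
pose K := (N + M).+1; pose a' i := if (i < M)%N then a i else 0.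
have a'K i : (K <= i)%N -> a' i = 0 by rewrite /a' /K; case: ifP => //; lia.
have ha' n : g n = \sum_(i < K) a' i * lcoef (F i%:Z) n.
  rewrite ha (@sum_ord_widen_if _ M K (fun i => a i * lcoef (F i%:Z) n)); last by rewrite /K; lia.
  by apply: eq_bigr => i _; rewrite /a'; case: ifP; rewrite ?mul0r.
have ca i : c i%:Z = a' i.
  apply/eqP; rewrite -subr_eq0; apply/eqP; move: i.
  apply: (@unitriangular_free (fun i => c i%:Z - a' i) K).
    by move=> i hi; rewrite hc ?a'K ?subr0 //; move: hi; rewrite /K; lia.
  move=> n; under eq_bigr do rewrite mulrBl; rewrite sumrB.
  rewrite -(decomp_coef_nat n hdec) ?ltnS ?leq_addr // hfg ha' basis_sum_coef_nat //.
  exact: subrr.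
move=> n; rewrite /piplus lcoef_lsum ha'.
rewrite (@sum_ord_widen_zero _ _ K (fun i => lcoef (lscale (c i%:Z) (F i%:Z)) n)).
- by apply: eq_bigr => i _; rewrite /= ca.
- by rewrite /K ltnS leq_addr.
- by move=> k hk; rewrite /= hc ?mul0r //; lia.
Qed.

End Hplus.

Lemma sum_select_rev (R : pzSemiRingType) (x : nat -> R) (a n : nat) :
  \sum_(i < a) x i * (if n == (a - i.+1)%N then 1 else 0) =
  if (n < a)%N then x (a - n.+1)%N else 0.
Proof.
elim: a x => [|a IH] x; first by rewrite big_ord0.
rewrite big_ord_recl subn1 /=.
under eq_bigr => i _ do rewrite subSS.
rewrite (IH (fun i => x i.+1)) ltnS.
case: (ltngtP n a) => [lt_na|lt_an|->]; rewrite ?mulr0 ?add0r ?subnn ?mulr1 ?addr0 //.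
by congr x; lia.
Qed.

Section CentralSystem.
Variables (A : comPzRingType) (h : nat -> nat -> A).

Lemma Hs_coef_nat (k n : nat) : lcoef (Hs h k) n%:Z = if n == k then 1 else 0.
Proof. by rewrite /= eqz_nat addr0. Qed.

Lemma Hs_coef_neg (k l : nat) : lcoef (Hs h k) (- l.+1%:Z) = Hc h k l.+1.
Proof. exact: add0r. Qed.

(* The part of [H^(j) H^(k)] of nonnegative degree, in the form in which it
   appears in [CS]. *)
Definition Hmul_plus (j k : nat) (n : int) : A :=
  lcoef (Hs h (j + k)) n +
  (\sum_(i < k) Hc h j i.+1 * lcoef (Hs h (k - i.+1)) n +
   \sum_(i < j) Hc h k i.+1 * lcoef (Hs h (j - i.+1)) n).

Lemma CS_coef (j k : nat) (n : int) :
  lcoef (CS h j k) n = Hmul_plus j k n - lcoef (lmul (Hs h j) (Hs h k)) n.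
Proof. by rewrite /Hmul_plus /CS /= !lcoef_lsum; ring. Qed.

Lemma lmul_Hs_coef_nat (j k n : nat) :
  lcoef (lmul (Hs h j) (Hs h k)) n%:Z = Hmul_plus j k n%:Z.
Proof.
have Hk_top : lcoef (Hs h k) k%:Z = 1 by rewrite Hs_coef_nat eqxx.
have Hk_lt i : (i < k)%N -> lcoef (Hs h k) i%:Z = 0 by rewrite Hs_coef_nat => /ltn_eqF ->.
rewrite (lmul_monic_coef (@lboundP _ _) (@lboundP _ (Hs h k)) Hk_top Hk_lt (L := j));
  last by rewrite /=; lia.
have high : \sum_(l < j) lcoef (Hs h j) (n%:Z + l.+1%:Z) * lcoef (Hs h k) (- l.+1%:Z) =
            \sum_(i < j) Hc h k i.+1 * lcoef (Hs h (j - i.+1)) n%:Z.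
  apply: eq_bigr => l _; rewrite Hs_coef_neg -PoszD !Hs_coef_nat mulrC.
  by have lj := ltn_ord l; have -> : (n + l.+1 == j) = (n == j - l.+1)%N by lia.
have low : lcoef (Hs h j) (n%:Z - k%:Z) =
           lcoef (Hs h (j + k)) n%:Z + \sum_(i < k) Hc h j i.+1 * lcoef (Hs h (k - i.+1)) n%:Z.
  under [X in _ = _ + X]eq_bigr do rewrite Hs_coef_nat.
  rewrite (sum_select_rev (fun i => Hc h j i.+1)) Hs_coef_nat; case: ltnP => nk.
    rewrite (_ : n%:Z - k%:Z = - (k - n.+1)%N.+1%:Z) ?Hs_coef_neg; last by lia.
    by rewrite ifF ?add0r; [congr Hc; lia | lia].
  rewrite (_ : n%:Z - k%:Z = (n - k)%N%:Z) ?Hs_coef_nat; last by lia.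
  by rewrite addr0; have -> : (n - k == j)%N = (n == j + k)%N by lia.
by rewrite /Hmul_plus low high addrA.
Qed.

End CentralSystem.

Section IntegralCurve.
Variables (A : comPzRingType) (d : {additive A -> A}) (m : nat) (h : nat -> nat -> A).
Variable F : int -> laurent A.
Hypotheses (hd : is_derivation d) (hF : is_FdB d h m F).

(* [H~_+] is stable under [d/dx + H^(m)], which maps [F^(i)] to [F^(i+m)]. *)
Lemma in_Hplus_derivH {g : laurent A} :
  in_Hplus F (lcoef g) -> in_Hplus F (fun n => d (lcoef g n) + lcoef (lmul (Hs h m) g) n).
Proof.
have [_ F_shift F_tri] := hF; move=> [M [a ha]].
pose G i n := d (a i) * lcoef (F i%:Z) n + a i * lcoef (F (i + m)%N%:Z) n.
apply: (in_Hplus_ext (g := fun n => \sum_(i < M) G i n)); last first.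
  by apply: in_Hplus_sum => i; apply: in_HplusD; apply: in_HplusZ; exact: in_Hplus_basis.
move=> n; rewrite (@lmul_sumr _ (Hs h m) g M a (fun i => F i%:Z) M%:Z ha); last first.
  by move=> i k iM Mk; apply: (proj2 (F_tri i%:Z)); lia.
rewrite ha raddf_sum -big_split /=; apply: eq_bigr => i _.
by rewrite /G hd -addrA -mulrDr PoszD F_shift.
Qed.

Hypotheses (hm : (0 < m)%N) (hcurve : integral_curve d h m).

(* The flow of [t_m] reads [H^(k+m) = (d/dx + H^(m)) H^(k) - (lower H's)]. *)
Lemma Hs_in_Hplus (k : nat) : in_Hplus F (lcoef (Hs h k)).
Proof.
have [F_init _ _] := hF.
elim/ltn_ind: k => k IH; case: (ltnP k m) => km.
  by apply: (in_Hplus_ext _ (in_Hplus_basis F k)) => n; rewrite F_init.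
have ek : k = (m + (k - m))%N by rewrite subnKC.
set k' := (k - m)%N in ek *; have k'k : (k' < k)%N by rewrite /k'; lia.
pose S n := \sum_(i < k') Hc h m i.+1 * lcoef (Hs h (k' - i.+1)) n +
            \sum_(i < m) Hc h k' i.+1 * lcoef (Hs h (m - i.+1)) n.
apply: (in_Hplus_ext
  (g := fun n => d (lcoef (Hs h k') n) + lcoef (lmul (Hs h m) (Hs h k')) n + (-1) * S n)).
  move=> n; rewrite -[d _]/(lcoef (lderiv d (Hs h k')) n) hcurve CS_coef.
  by rewrite /Hmul_plus -/(S n) ek; ring.
have hS : in_Hplus F S.
  rewrite /S; apply: in_HplusD; apply: in_Hplus_sum => i; apply/in_HplusZ/IH.
    by have := ltn_ord i; lia.
  by have := ltn_ord i; lia.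
exact: in_HplusD (in_Hplus_derivH (IH k' k'k)) (in_HplusZ (-1) hS).
Qed.

Lemma Hmul_plus_in_Hplus (j k : nat) : in_Hplus F (Hmul_plus h j k).
Proof.
apply/in_HplusD/in_HplusD; first exact: Hs_in_Hplus.
all: by apply: in_Hplus_sum => i; apply/in_HplusZ/Hs_in_Hplus.
Qed.

End IntegralCurve.

Theorem mainTheorem10 (A : comPzRingType) (d : {additive A -> A})
    (hd : is_derivation d)
    (m : nat) (hm : (1 <= m)%N) (h : nat -> nat -> A)
    (hcurve : integral_curve d h m)
    (F : int -> laurent A) (hF : is_FdB d h m F) :
  (forall (j : nat) (c : int -> A) (N : nat),
      decomp F (lmono j%:Z) c N -> leqL (Hs h j) (piplus F c N))
  /\
  (forall (a j : nat), (1 <= a <= m)%N -> (1 <= j)%N ->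
    forall (c1 : int -> A) (N1 : nat) (c2 : int -> A) (N2 : nat),
      decomp F (lmono j%:Z) c1 N1 ->
      decomp F (lmul (Hs h a) (piplus F c1 N1)) c2 N2 ->
      leqL (CS h j a) (lopp (piminus F (lmul (Hs h a) (piplus F c1 N1)) c2 N2))).
Proof.
have [_ _ F_tri] := hF.
have F_monic j : lcoef (F j) j = 1 by case: (F_tri j).
have F_bound j n : j < n -> lcoef (F j) n = 0 by case: (F_tri j) => _; apply.
have piplus_mono j c N : decomp F (lmono j%:Z) c N -> leqL (Hs h j) (piplus F c N).
  move=> hdec n; symmetry.
  apply: (piplus_in_HplusE F_monic F_bound hdec (Hs_in_Hplus hd hF hm hcurve j)) => i.
  by rewrite Hs_coef_nat /= eqz_nat.
split; first exact: piplus_mono.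
move=> a j _ _ c1 N1 c2 N2 hdec1 hdec2 n.
set P := lmul (Hs h a) (piplus F c1 N1).
have eP k : lcoef P k = lcoef (lmul (Hs h j) (Hs h a)) k.
  by rewrite lmulC; apply: lmul_congr => // i; rewrite (piplus_mono j c1 N1).
have piP := piplus_in_HplusE F_monic F_bound hdec2 (Hmul_plus_in_Hplus hd hF hm hcurve j a)
  (fun i => etrans (eP i%:Z) (lmul_Hs_coef_nat h j a i)).
rewrite CS_coef -eP (_ : lcoef (lopp _) n = - (lcoef P n - lcoef (piplus F c2 N2) n)) //.
by rewrite piP opprB.
Qed.
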